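(* Let $G$ be a finite group generated by reflections of a real Euclidean space $V$ with root system $R$. For any special involution $\sigma\in G$, the centraliser $C(\sigma)=\{g\in G:g\sigma=\sigma g\}$ coincides with the product $G_1\times G_2$ of the corresponding Coxeter subgroups.
   Context: For an involution $\sigma\in G$ (including the identity), let $V_1=\{v:\sigma v=-v\}$ and $V_2=\{v:\sigma v=v\}$, $R_i=R\cap V_i$, and $G_i$ the subgroup of $G$ generated by the reflections in the roots of $R_i$ ($i=1,2$); $G_1$ and $G_2$ commute and intersect trivially, so $G_1G_2\cong G_1\times G_2$. The involution $\sigma$ is called special if for every root $a\in R$ at least one of the orthogonal projections of $a$ onto $V_1$ and onto $V_2$ is proportional to a root from $R_1$ or $R_2$. *)

From HB Require Import structures.
From mathcomp Require Import all_boot all_order all_algebra.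
From mathcomp Require Import reals.
Set Implicit Arguments. Unset Strict Implicit. Unset Printing Implicit Defensive.
Import Order.TTheory GRing.Theory Num.Theory.
Local Open Scope ring_scope.

(* Euclidean space V = 'rV[R]_n with standard inner product.
   Linear maps act on the right: g applied to v is  v *m g. *)
Definition dotv (R : nzRingType) (n : nat) (u v : 'rV[R]_n) : R := (u *m v^T) 0 0.

(* orthogonal reflection s_a : v |-> v - 2 (v,a)/(a,a) a *)
Definition refl (R : fieldType) (n : nat) (a : 'rV[R]_n) : 'M[R]_n :=
  1%:M - (2 / dotv a a) *: (a^T *m a).

Definition prodmx (R : nzRingType) (n : nat) (s : seq 'M[R]_n) : 'M[R]_n :=
  foldr mulmx 1%:M s.

(* membership in the group generated by a set S of involutions (here:
   reflections, which are their own inverses): finite products of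
   elements of S *)
Definition genmx (R : nzRingType) (n : nat) (S : seq 'M[R]_n) (g : 'M[R]_n) : Prop :=
  exists s : seq 'M[R]_n, all (fun x => x \in S) s /\ g = prodmx s.

Definition root_system (R : fieldType) (n : nat) (rs : seq 'rV[R]_n) : Prop :=
  (forall a, a \in rs -> a != 0) /\
  (forall a b, a \in rs -> b \in rs -> b *m refl a \in rs).

Definition reflgroup (R : fieldType) (n : nat) (rs : seq 'rV[R]_n) (g : 'M[R]_n) : Prop :=
  genmx [seq refl a | a <- rs] g.

Definition V1 (R : nzRingType) (n : nat) (sigma : 'M[R]_n) (v : 'rV[R]_n) : Prop :=
  v *m sigma = - v.
Definition V2 (R : nzRingType) (n : nat) (sigma : 'M[R]_n) (v : 'rV[R]_n) : Prop :=
  v *m sigma = v.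

Definition roots1 (R : nzRingType) (n : nat) (rs : seq 'rV[R]_n) (sigma : 'M[R]_n) :=
  [seq a <- rs | a *m sigma == - a].
Definition roots2 (R : nzRingType) (n : nat) (rs : seq 'rV[R]_n) (sigma : 'M[R]_n) :=
  [seq a <- rs | a *m sigma == a].

Definition G1 (R : fieldType) (n : nat) (rs : seq 'rV[R]_n) (sigma g : 'M[R]_n) : Prop :=
  reflgroup (roots1 rs sigma) g.
Definition G2 (R : fieldType) (n : nat) (rs : seq 'rV[R]_n) (sigma g : 'M[R]_n) : Prop :=
  reflgroup (roots2 rs sigma) g.

Definition is_orth_proj (R : nzRingType) (n : nat) (P : 'rV[R]_n -> Prop)
  (a w : 'rV[R]_n) : Prop :=
  P w /\ forall u, P u -> dotv (a - w) u = 0.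

Definition prop_to_root (R : nzRingType) (n : nat) (S : seq 'rV[R]_n) (w : 'rV[R]_n) : Prop :=
  exists b c, b \in S /\ w = c *: b.

Definition special (R : nzRingType) (n : nat) (rs : seq 'rV[R]_n) (sigma : 'M[R]_n) : Prop :=
  forall a, a \in rs ->
    (exists w, is_orth_proj (V1 sigma) a w /\
       (prop_to_root (roots1 rs sigma) w \/ prop_to_root (roots2 rs sigma) w)) \/
    (exists w, is_orth_proj (V2 sigma) a w /\
       (prop_to_root (roots1 rs sigma) w \/ prop_to_root (roots2 rs sigma) w)).

(* Let g in G commute with sigma.  Then g preserves V_1 and V_2, hence permutes R_1 and
   R_2.  Since G_i is transitive on the Weyl chambers of R_i, there are h_i in G_i such
   that h = g h_2 h_1 maps a chosen positive system of R_i onto itself (i = 1, 2), so h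
   fixes the sums rho_1, rho_2 of these positive roots.  Each rho_i is regular for R_i,
   and speciality of sigma says exactly that no root is orthogonal to both: the projection
   of such a root onto V_i would be a multiple of a root orthogonal to rho_i, hence 0.
   So rho_1 + t rho_2 is regular for R for a suitable t, and an element of G fixing a
   regular vector is trivial; thus g = h_1^-1 h_2^-1 lies in G_1 G_2.  The facts about
   reflection groups used here (chamber transitivity, regularity of rho, triviality of
   the stabiliser of a regular vector) are derived from a simple system, taken to be an
   irredundant set of generators of the cone of positive roots. *)

From mathcomp Require Import all_boot all_order all_algebra.
From mathcomp Require Import reals.
From mathcomp Require Import ring lra zify.
From Stdlib Require Import Classical.
Set Implicit Arguments. Unset Strict Implicit. Unset Printing Implicit Defensive.
Import Order.TTheory GRing.Theory Num.Theory.
Local Open Scope ring_scope.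

Lemma count_lt_subpred (T : eqType) (s : seq T) (a b : pred T) x :
  subpred a b -> x \in s -> b x -> ~~ a x -> (count a s < count b s)%N.
Proof.
move=> ab xs bx ax; elim: s xs => //= y s IH; rewrite inE => /orP [/eqP <-|ys].
  by rewrite bx (negbTE ax) add0n ltnS sub_count.
have := IH ys; case: (boolP (a y)) => [/ab -> /=|_]; first by lia.
by case: (b y) => /=; lia.
Qed.

Section InnerProduct.
Variables (R : realFieldType) (n : nat).
Implicit Types (u v w a b : 'rV[R]_n) (M : 'M[R]_n).

Lemma dotvE u v : dotv u v = \sum_i u 0 i * v 0 i.
Proof. by rewrite /dotv !mxE; apply: eq_bigr => i _; rewrite mxE. Qed.

Lemma dotvC u v : dotv u v = dotv v u.
Proof. by rewrite !dotvE; apply: eq_bigr => i _; rewrite mulrC. Qed.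

Lemma dotvDr u v w : dotv u (v + w) = dotv u v + dotv u w.
Proof. by rewrite !dotvE -big_split; apply: eq_bigr => i _; rewrite mxE mulrDr. Qed.

Lemma dotvDl u v w : dotv (v + w) u = dotv v u + dotv w u.
Proof. by rewrite dotvC dotvDr !(dotvC u). Qed.

Lemma dotvZr u v c : dotv u (c *: v) = c * dotv u v.
Proof. by rewrite !dotvE mulr_sumr; apply: eq_bigr => i _; rewrite mxE mulrCA. Qed.

Lemma dotvZl u v c : dotv (c *: v) u = c * dotv v u.
Proof. by rewrite dotvC dotvZr dotvC. Qed.

Lemma dotvNr u v : dotv u (- v) = - dotv u v.
Proof. by rewrite -scaleN1r dotvZr mulN1r. Qed.

Lemma dotvNl u v : dotv (- v) u = - dotv v u.
Proof. by rewrite dotvC dotvNr dotvC. Qed.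

Lemma dotvBl u v w : dotv (v - w) u = dotv v u - dotv w u.
Proof. by rewrite dotvDl dotvNl. Qed.

Lemma dotv0r u : dotv u 0 = 0.
Proof. by rewrite -(scale0r 0) dotvZr mul0r. Qed.

Lemma dotv_suml (I : Type) (r : seq I) (F : I -> 'rV[R]_n) u :
  dotv (\sum_(i <- r) F i) u = \sum_(i <- r) dotv (F i) u.
Proof.
elim: r => [|x r IH]; first by rewrite !big_nil dotvC dotv0r.
by rewrite !big_cons dotvDl IH.
Qed.

Lemma dotv_ge0 u : 0 <= dotv u u.
Proof. by rewrite dotvE sumr_ge0 // => i _; rewrite -expr2 sqr_ge0. Qed.

Lemma dotv_eq0 u : (dotv u u == 0) = (u == 0).
Proof.
apply/idP/idP => [|/eqP->]; last by rewrite dotv0r.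
rewrite dotvE psumr_eq0 => [/allP u0|i _]; last by rewrite -expr2 sqr_ge0.
apply/eqP/rowP => i; apply/eqP; rewrite mxE -[_ == 0]orbb -mulf_eq0.
exact: u0 (mem_index_enum i).
Qed.

Lemma dotv_gt0 u : u != 0 -> 0 < dotv u u.
Proof. by move=> u0; rewrite lt_def dotv_ge0 dotv_eq0 u0. Qed.

Lemma dotv_mulmx u v M : dotv (u *m M) v = dotv u (v *m M^T).
Proof. by rewrite /dotv trmx_mul trmxK mulmxA. Qed.

Lemma rV_oppr_eq u : - u = u -> u = 0.
Proof.
move=> Nu; apply/rowP => i; apply/eqP; rewrite mxE -eqNr.
by have := congr1 (fun x : 'rV[R]_n => x 0 i) Nu; rewrite mxE => ->.
Qed.

End InnerProduct.

Section Reflections.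
Variables (R : realFieldType) (n : nat).
Implicit Types (v a b : 'rV[R]_n) (M : 'M[R]_n).

Lemma mx_ext M1 M2 : (forall v : 'rV[R]_n, v *m M1 = v *m M2) -> M1 = M2.
Proof. by move=> eqM; apply/row_matrixP => i; rewrite !rowE eqM. Qed.

Lemma mulmx_refl v a : v *m refl a = v - (2 * dotv v a / dotv a a) *: a.
Proof.
rewrite /refl mulmxBr mulmx1 -scalemxAr mulmxA.
by rewrite [v *m a^T]mx11_scalar mul_scalar_mx scalerA mulrAC.
Qed.

Lemma mulmx_refl_orth v a : dotv v a = 0 -> v *m refl a = v.
Proof. by move=> va; rewrite mulmx_refl va mulr0 mul0r scale0r subr0. Qed.

Lemma mulmx_refl_self a : a != 0 -> a *m refl a = - a.
Proof.
move=> a0; rewrite mulmx_refl mulfK ?dotv_eq0 //.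
by rewrite scaler_nat mulr2n opprD addNKr.
Qed.

Lemma refl_invol a : a != 0 -> refl a *m refl a = 1%:M.
Proof.
move=> a0; apply: mx_ext => v; rewrite mulmx1 mulmxA (mulmx_refl v) mulmxBl.
by rewrite -scalemxAl mulmx_refl_self // mulmx_refl scalerN opprK subrK.
Qed.

Lemma mulmx_reflK a v : a != 0 -> v *m refl a *m refl a = v.
Proof. by move=> a0; rewrite -mulmxA refl_invol // mulmx1. Qed.

Lemma trmx_refl a : (refl a)^T = refl a.
Proof.
apply/matrixP => i j; rewrite /refl !mxE !big_ord1 !mxE eq_sym.
by rewrite (mulrC (a 0 j)).
Qed.

Lemma reflZ c a : c != 0 -> refl (c *: a) = refl a.
Proof.
move=> c0; have [->|a0] := eqVneq a 0; first by rewrite scaler0.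
have aa : dotv a a != 0 by rewrite dotv_eq0.
apply: mx_ext => v; rewrite !mulmx_refl !dotvZl !dotvZr scalerA.
by congr (_ - _ *: _); field; rewrite c0 aa.
Qed.

Lemma reflN a : refl (- a) = refl a.
Proof. by rewrite -scaleN1r reflZ // oppr_eq0 oner_eq0. Qed.

Lemma refl_mulmx a M : M *m M^T = 1%:M -> refl (a *m M) = M^T *m refl a *m M.
Proof.
move=> MMt; have MtM : M^T *m M = 1%:M by apply: mulmx1C.
apply: mx_ext => v; rewrite !mulmxA mulmx_refl (mulmx_refl (v *m M^T)).
rewrite mulmxBl -scalemxAl -mulmxA MtM mulmx1.
by rewrite !dotv_mulmx trmxK -!mulmxA MMt !mulmx1.
Qed.

Definition collinear b a := b == (dotv b a / dotv a a) *: a.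

Lemma collinearP a b : a != 0 -> reflect (exists c, b = c *: a) (collinear b a).
Proof.
move=> a0; have aa : dotv a a != 0 by rewrite dotv_eq0.
apply: (iffP eqP) => [->|[c ->]]; first by eexists.
by rewrite dotvZl mulfK.
Qed.

Lemma collinear_refl a b : a != 0 -> collinear (b *m refl a) a = collinear b a.
Proof.
move=> a0; apply/(collinearP _ a0)/(collinearP _ a0) => -[c bc]; exists (- c).
  by rewrite -(mulmx_reflK b a0) bc -scalemxAl mulmx_refl_self // scalerN scaleNr.
by rewrite bc -scalemxAl mulmx_refl_self // scalerN scaleNr.
Qed.

Lemma refl_collinear a b : a != 0 -> b != 0 -> collinear b a -> refl b = refl a.
Proof.
move=> a0 b0 /(collinearP _ a0) [c bc]; rewrite bc reflZ //.
by apply: contra b0 => /eqP c0; rewrite bc c0 scale0r.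
Qed.

Definition reflprod (w : seq 'rV[R]_n) : 'M[R]_n := prodmx (map (@refl R n) w).

Lemma reflprod_nil : reflprod [::] = 1%:M. Proof. by []. Qed.

Lemma reflprod_cons a w : reflprod (a :: w) = refl a *m reflprod w. Proof. by []. Qed.

Lemma reflprod_cat w1 w2 : reflprod (w1 ++ w2) = reflprod w1 *m reflprod w2.
Proof.
elim: w1 => [|a w IH]; first by rewrite /= mul1mx.
by rewrite cat_cons !reflprod_cons IH mulmxA.
Qed.

Lemma trmx_reflprod w : (reflprod w)^T = reflprod (rev w).
Proof.
elim: w => [|a w IH]; first by rewrite trmx1.
rewrite reflprod_cons trmx_mul IH trmx_refl rev_cons -cats1 reflprod_cat.
by rewrite reflprod_cons reflprod_nil mulmx1.
Qed.

Lemma reflprod_orth w : {in w, forall a, a != 0} -> reflprod w *m (reflprod w)^T = 1%:M.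
Proof.
elim: w => [|a w IH] w0; first by rewrite trmx1 mulmx1.
rewrite reflprod_cons trmx_mul trmx_refl mulmxA -(mulmxA (refl a)) IH; last first.
  by move=> b bw; apply: w0; rewrite inE bw orbT.
by rewrite mulmx1 refl_invol // w0 // mem_head.
Qed.

Lemma mulmx_reflprod_orth w v : {in w, forall c, dotv v c = 0} -> v *m reflprod w = v.
Proof.
elim: w => [|a w IH] vw; first by rewrite mulmx1.
rewrite reflprod_cons mulmxA mulmx_refl_orth ?vw ?mem_head //.
by apply: IH => c cw; apply: vw; rewrite inE cw orbT.
Qed.

Lemma reflgroupP (S : seq 'rV[R]_n) g :
  reflgroup S g <-> exists w, {subset w <= S} /\ g = reflprod w.
Proof.
split=> [[s [/allP sS ->]]|[w [wS ->]]]; last first.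
  exists (map (@refl R n) w); split => //.
  by apply/allP => x /mapP [a aw ->]; apply: map_f; apply: wS.
elim: s sS => [|x s IH] sS; first by exists [::].
have /mapP [a aS ->] := sS x (mem_head _ _).
have [w [wS ew]] : exists w, {subset w <= S} /\ prodmx s = reflprod w.
  by apply: IH => y ys; apply: sS; rewrite inE ys orbT.
exists (a :: w); split; last by rewrite /= ew.
by move=> z; rewrite inE => /orP [/eqP ->|/wS].
Qed.

End Reflections.

Section Cones.
Variables (R : realFieldType) (n : nat).
Implicit Types (S : seq 'rV[R]_n) (u v : 'rV[R]_n).

Definition cone S v :=
  exists c : 'rV[R]_n -> R, (forall x, 0 <= c x) /\ v = \sum_(x <- S) c x *: x.

Lemma cone0 S : cone S 0.
Proof.
by exists (fun _ => 0); split => //; rewrite big1 // => x _; rewrite scale0r.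
Qed.

Lemma coneD S u v : cone S u -> cone S v -> cone S (u + v).
Proof.
move=> [c [c0 ->]] [d [d0 ->]]; exists (fun x => c x + d x); split.
  by move=> x; rewrite addr_ge0.
by rewrite -big_split; apply: eq_bigr => x _; rewrite scalerDl.
Qed.

Lemma coneZ S k u : 0 <= k -> cone S u -> cone S (k *: u).
Proof.
move=> k0 [c [c0 ->]]; exists (fun x => k * c x); split.
  by move=> x; rewrite mulr_ge0.
by rewrite scaler_sumr; apply: eq_bigr => x _; rewrite scalerA.
Qed.

Lemma cone_sum S (r : seq 'rV[R]_n) (F : 'rV[R]_n -> 'rV[R]_n) :
  {in r, forall x, cone S (F x)} -> cone S (\sum_(x <- r) F x).
Proof.
elim: r => [|x r IH] rS; first by rewrite big_nil; apply: cone0.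
rewrite big_cons; apply: coneD; first by apply: rS; rewrite mem_head.
by apply: IH => y yr; apply: rS; rewrite inE yr orbT.
Qed.

Lemma cone_trans S S' v : {in S, forall x, cone S' x} -> cone S v -> cone S' v.
Proof.
by move=> SS' [c [c0 ->]]; apply: cone_sum => x xS; apply: coneZ => //; apply: SS'.
Qed.

Lemma cone_mem S x : uniq S -> x \in S -> cone S x.
Proof.
move=> uS xS; exists (fun z => (z == x)%:R); split => [z|]; first by rewrite ler0n.
rewrite (bigD1_seq x) //= eqxx scale1r big1 ?addr0 // => z /negbTE ->.
by rewrite scale0r.
Qed.

Lemma cone_dotv_ge0 S v u : cone S v -> {in S, forall x, 0 <= dotv x u} ->
  0 <= dotv v u.
Proof.
move=> [c [c0 ->]] Su; rewrite dotv_suml big_seq sumr_ge0 // => x xS.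
by rewrite dotvZl mulr_ge0 // Su.
Qed.

Lemma psum_dotv_eq0 S c u :
  (forall x, 0 <= c x) -> {in S, forall x, 0 < dotv x u} ->
  dotv (\sum_(x <- S) c x *: x) u = 0 -> {in S, forall x, c x = 0}.
Proof.
move=> c0 Su /eqP; rewrite dotv_suml big_seq psumr_eq0 => [/allP cS x xS|x xS].
  by move: (cS x xS); rewrite xS dotvZl mulf_eq0 (gt_eqF (Su x xS)) orbF => /eqP.
by rewrite dotvZl mulr_ge0 // ltW // Su.
Qed.

Lemma cone_dotv_gt0 S v u : cone S v -> v != 0 -> {in S, forall x, 0 < dotv x u} ->
  0 < dotv v u.
Proof.
move=> [c [c0 ev]] v0 Su; rewrite lt_def andbC.
rewrite (cone_dotv_ge0 (ex_intro _ c (conj c0 ev))) => [/=|x /Su /ltW //].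
apply: contra v0 => /eqP vu0; rewrite ev big_seq big1 // => x xS.
by rewrite (psum_dotv_eq0 c0 Su) -?ev ?scale0r.
Qed.

End Cones.

Section RootSystem.
Variables (R : realFieldType) (n : nat) (L : seq 'rV[R]_n) (q : 'rV[R]_n).
Hypothesis rootL : root_system L.
Hypothesis regq : {in L, forall a, dotv a q != 0}.
Implicit Types (u v x a b c : 'rV[R]_n) (M : 'M[R]_n) (w D : seq 'rV[R]_n).

Lemma root_neq0 a : a \in L -> a != 0.
Proof. by case: rootL => L0 _; apply: L0. Qed.

Lemma root_mulmx_refl a b : a \in L -> b \in L -> b *m refl a \in L.
Proof. by case: rootL => _; apply. Qed.

Lemma rootN a : a \in L -> - a \in L.
Proof. by move=> aL; rewrite -mulmx_refl_self ?root_neq0 // root_mulmx_refl. Qed.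

Lemma root_mulmx_reflprod w b : {subset w <= L} -> b \in L -> b *m reflprod w \in L.
Proof.
elim: w b => [|a w IH] b wL bL; first by rewrite mulmx1.
rewrite reflprod_cons mulmxA; apply: IH.
  by move=> x xw; apply: wL; rewrite inE xw orbT.
by rewrite root_mulmx_refl // wL // mem_head.
Qed.

Lemma reflprod_roots_orth w : {subset w <= L} -> reflprod w *m (reflprod w)^T = 1%:M.
Proof. by move=> wL; apply: reflprod_orth => a /wL /root_neq0. Qed.

Definition posroots := [seq a <- undup L | 0 < dotv a q].

Lemma mem_posroots b : (b \in posroots) = (b \in L) && (0 < dotv b q).
Proof. by rewrite mem_filter mem_undup andbC. Qed.

Lemma uniq_posroots : uniq posroots.
Proof. by rewrite filter_uniq // undup_uniq. Qed.

Lemma posroot_root b : b \in posroots -> b \in L.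
Proof. by rewrite mem_posroots => /andP []. Qed.

Lemma posroot_gt0 b : b \in posroots -> 0 < dotv b q.
Proof. by rewrite mem_posroots => /andP []. Qed.

Lemma posroot_neq0 b : b \in posroots -> b != 0.
Proof. by move/posroot_root/root_neq0. Qed.

Lemma posrootN b : b \in posroots -> (- b \in posroots) = false.
Proof. by move=> bP; rewrite mem_posroots dotvNl oppr_gt0 lt_gtF ?andbF ?posroot_gt0. Qed.

Lemma root_posrootsVN b : b \in L -> (b \in posroots) || (- b \in posroots).
Proof.
move=> bL; rewrite !mem_posroots bL rootN //= dotvNl oppr_gt0.
by case: ltgtP (regq bL).
Qed.

Definition dominant x := {in posroots, forall b, 0 <= dotv x b}.

Definition posroots_spanned_by D :=
  [/\ uniq D, {subset D <= posroots} & {in posroots, forall b, cone D b}].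

Definition simple_system D :=
  posroots_spanned_by D /\ forall y, y \in D -> ~ cone (rem y D) y.

Lemma exists_simple_system : exists D, simple_system D.
Proof.
suff: forall D, posroots_spanned_by D -> exists D', simple_system D'.
  have uP := uniq_posroots.
  by move/(_ posroots); apply; split=> // b; apply: cone_mem.
move=> D; have [m] := ubnP (size D); elim: m D => // m IH D szD [uD DP PD].
have [[y [yD redy]]|irrD] := classic (exists y, y \in D /\ cone (rem y D) y); last first.
  by exists D; split=> // y yD redy; apply: irrD; exists y.
apply: (IH (rem y D)).
  by move: szD (index_mem y D); rewrite size_rem // yD; case: (size D).
split=> [|x|b /PD]; first exact: rem_uniq.
  by rewrite (mem_rem_uniq _ uD) => /andP [_ /DP].
apply: cone_trans => x xD; have [->//|xy] := eqVneq x y.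
by apply: cone_mem; rewrite ?rem_uniq // (mem_rem_uniq _ uD) inE xy.
Qed.

Section SimpleSystem.
Variable D : seq 'rV[R]_n.
Hypothesis simpleD : simple_system D.

Lemma uniq_simple : uniq D.
Proof. by case: simpleD => -[]. Qed.

Lemma simple_posroot a : a \in D -> a \in posroots.
Proof. by case: simpleD => -[_ DP _] _; apply: DP. Qed.

Lemma posroot_cone b : b \in posroots -> cone D b.
Proof. by case: simpleD => -[_ _ PD] _; apply: PD. Qed.

Lemma simple_irredundant y : y \in D -> ~ cone (rem y D) y.
Proof. by case: simpleD => _; apply. Qed.

Lemma simple_neq0 a : a \in D -> a != 0.
Proof. by move/simple_posroot/posroot_neq0. Qed.

Lemma simple_root a : a \in D -> a \in L.
Proof. by move/simple_posroot/posroot_root. Qed.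

Lemma simple_gt0 a : a \in D -> 0 < dotv a q.
Proof. by move/simple_posroot/posroot_gt0. Qed.

Lemma mem_rem_simple a z : (z \in rem a D) = (z != a) && (z \in D).
Proof. by rewrite (mem_rem_uniq _ uniq_simple). Qed.

Lemma dominant_simple x : {in D, forall a, 0 <= dotv x a} -> dominant x.
Proof.
move=> xD b /posroot_cone bD; rewrite dotvC; apply: cone_dotv_ge0 bD _.
by move=> a aD; rewrite dotvC xD.
Qed.

(* Otherwise either y is in the cone of the other simple roots (when its own
   coefficient is < 1), or pairing with q gives <y,q> > <y,q>. *)
Lemma not_cone_simple_sub y x k :
  y \in D -> x \in D -> x != y -> 0 < k -> ~ cone D (y - k *: x).
Proof.
move=> yD xD xy k_gt0 [c [c0]]; rewrite (big_rem y yD) /=.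
set S := \sum_(z <- rem y D) _ => e.
have coneS : cone (rem y D) S by exists c.
have [cy_lt1|cy_ge1] := ltP (c y) 1.
  apply: (simple_irredundant yD).
  have ey : y = (1 - c y)^-1 *: (k *: x + S).
    apply/rowP => i; have := congr1 (fun v : 'rV[R]_n => v 0 i) e.
    rewrite !mxE => ei; rewrite (_ : S 0 i = y 0 i - k * x 0 i - c y * y 0 i).
      by field; lra.
    by rewrite ei; ring.
  rewrite [X in cone _ X]ey; apply: coneZ; first by rewrite invr_ge0 subr_ge0 ltW.
  apply: coneD => //; apply: coneZ; first exact: ltW.
  by apply: cone_mem; rewrite ?rem_uniq ?uniq_simple ?mem_rem_simple ?xy.
have Sq : 0 <= dotv S q.
  by apply: cone_dotv_ge0 coneS _ => z; rewrite mem_rem_simple => /andP [_ /simple_gt0 /ltW].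
have := congr1 (fun v => dotv v q) e; rewrite /= dotvBl dotvZl dotvDl dotvZl.
have yq := simple_gt0 yD; have xq := simple_gt0 xD.
by nra.
Qed.

Lemma dotv_simple_le0 a b : a \in D -> b \in D -> a != b -> dotv a b <= 0.
Proof.
move=> aD bD ab; rewrite leNgt; apply/negP => ab_gt0.
have aa := dotv_gt0 (simple_neq0 aD).
set k := 2 * dotv b a / dotv a a.
have k_gt0 : 0 < k by rewrite /k dotvC divr_gt0 // mulr_gt0.
have ebk : b *m refl a = b - k *: a by rewrite mulmx_refl.
have /orP [tP|tNP] := root_posrootsVN (root_mulmx_refl (simple_root aD) (simple_root bD)).
  by apply: (not_cone_simple_sub bD aD ab k_gt0); rewrite -ebk; apply: posroot_cone.
apply: (not_cone_simple_sub aD bD (k := k^-1)); rewrite 1?eq_sym ?invr_gt0 //.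
have -> : a - k^-1 *: b = k^-1 *: - (b *m refl a).
  by rewrite ebk opprB scalerBr scalerA mulVf ?gt_eqF // scale1r.
by apply: coneZ; [rewrite invr_ge0 ltW | apply: posroot_cone].
Qed.

(* If b s_a were negative, b - b s_a = k a would be a nonnegative combination of D;
   pairing with a (using dotv_simple_le0) and with q kills every coefficient off a. *)
Lemma refl_simple_posroot a b :
  a \in D -> b \in posroots -> ~~ collinear b a -> b *m refl a \in posroots.
Proof.
move=> aD bP nab; have [//|tNP] := boolP (b *m refl a \in posroots); exfalso.
have aa := dotv_gt0 (simple_neq0 aD).
have tL := root_mulmx_refl (simple_root aD) (posroot_root bP).
have NtP : - (b *m refl a) \in posroots by move: (root_posrootsVN tL); rewrite (negbTE tNP).
have [c [c0 eb]] := posroot_cone bP; have [d [d0 et]] := posroot_cone NtP.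
set k := 2 * dotv b a / dotv a a.
have : \sum_(z <- D) (c z + d z) *: z = k *: a.
  rewrite (eq_bigr _ (fun z _ => scalerDl _ _ _)) big_split /= -eb -et.
  by rewrite mulmx_refl opprB addrC subrK.
rewrite (big_rem a aD) /=; set T := \sum_(z <- rem a D) _ => e.
have eT : T = (k - (c a + d a)) *: a by rewrite scalerBl -e addrAC subrr add0r.
have remD z : z \in rem a D -> z \in D /\ z != a.
  by rewrite mem_rem_simple => /andP [].
have Ta : dotv T a <= 0.
  rewrite dotv_suml big_seq sumr_le0 // => z /remD [zD za].
  by rewrite dotvZl mulr_ge0_le0 ?addr_ge0 ?dotv_simple_le0.
have coef_le0 : k - (c a + d a) <= 0.
  by move: Ta; rewrite eT dotvZl pmulr_lle0.
have Tq : dotv T q = 0.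
  apply/eqP; rewrite eq_le; apply/andP; split.
    by rewrite eT dotvZl mulr_le0_ge0 // ltW // simple_gt0.
  apply: cone_dotv_ge0 (ex_intro _ (fun z => c z + d z) _) _.
    by split => // z; rewrite addr_ge0.
  by move=> z /remD [/simple_gt0 /ltW].
have cd0 : {in rem a D, forall z, c z + d z = 0}.
  apply: psum_dotv_eq0 Tq => [z|z /remD [/simple_gt0]] //.
  by rewrite addr_ge0.
apply: (negP nab); apply/collinearP; first exact: simple_neq0.
exists (c a); rewrite eb (big_rem a aD) /= big1_seq ?addr0 // => z /andP [_ zr].
move: (paddr_eq0 (c0 z) (d0 z)); rewrite cd0 // eqxx => /esym /andP [/eqP ->].
by rewrite scale0r.
Qed.

Definition posroots_col a := [seq b <- posroots | collinear b a].
Definition posroots_ncol a := [seq b <- posroots | ~~ collinear b a].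

Lemma perm_posroots_col a : perm_eq (posroots_col a ++ posroots_ncol a) posroots.
Proof. exact/permEl/perm_filterC. Qed.

Lemma posroots_colP a b : a \in D -> b \in posroots_col a -> exists2 c, 0 < c & b = c *: a.
Proof.
move=> aD; rewrite mem_filter => /andP [/(collinearP _ (simple_neq0 aD)) [c ebc] bP].
exists c => //; move: (posroot_gt0 bP); rewrite ebc dotvZl.
by rewrite pmulr_lgt0 // simple_gt0.
Qed.

Lemma simple_posroots_col a : a \in D -> a \in posroots_col a.
Proof.
move=> aD; rewrite mem_filter simple_posroot // andbT.
by apply/collinearP; [exact: simple_neq0 | exists 1; rewrite scale1r].
Qed.

Lemma perm_refl_posroots_ncol a : a \in D ->
  perm_eq [seq b *m refl a | b <- posroots_ncol a] (posroots_ncol a).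
Proof.
move=> aD; have a0 := simple_neq0 aD.
have mem_ncol b : b \in posroots_ncol a -> b *m refl a \in posroots_ncol a.
  rewrite !(mem_filter (fun b => ~~ collinear b a)) collinear_refl //.
  by move=> /andP [nba bP]; rewrite nba refl_simple_posroot.
apply: uniq_perm; rewrite ?filter_uniq ?undup_uniq //.
  rewrite map_inj_uniq ?filter_uniq ?undup_uniq // => x y exy.
  by rewrite -(mulmx_reflK x a0) exy mulmx_reflK.
move=> x; apply/mapP/idP => [[b /mem_ncol bP ->]//|xP].
by exists (x *m refl a); rewrite ?mem_ncol ?mulmx_reflK.
Qed.

Definition inversions x := [seq b <- posroots | dotv x b < 0].

Lemma inversions_refl_simple x a : a \in D -> dotv x a < 0 ->
  (size (inversions (x *m refl a)) < size (inversions x))%N.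
Proof.
move=> aD xa; rewrite !size_filter -!(permP (perm_posroots_col a)) !count_cat.
have -> : count (fun b => dotv (x *m refl a) b < 0) (posroots_col a) = 0%N.
  apply/eqP; rewrite -leqn0 leqNgt -has_count.
  apply/hasP => -[b /(posroots_colP aD) [c c0 ->]].
  rewrite dotv_mulmx trmx_refl -scalemxAl mulmx_refl_self ?simple_neq0 //.
  by rewrite dotvZr dotvNr mulrN oppr_lt0 pmulr_rgt0 // ltNge (ltW xa).
rewrite -(permP (perm_refl_posroots_ncol aD)) count_map.
rewrite (eq_count (a2 := fun b => dotv x b < 0)) => [|b /=]; last first.
  by rewrite dotv_mulmx trmx_refl mulmx_reflK ?simple_neq0.
rewrite ltn_add2r -has_count; apply/hasP.
by exists a; rewrite ?simple_posroots_col.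
Qed.

Lemma dominant_reflprod_simple x : exists w, {subset w <= D} /\ dominant (x *m reflprod w).
Proof.
have [m] := ubnP (size (inversions x)); elim: m x => // m IH x szx.
have [/hasP [a aD xa]|/hasPn xD] := boolP (has (fun a => dotv x a < 0) D).
  have [w [wD domw]] := IH (x *m refl a) (leq_trans (inversions_refl_simple aD xa) szx).
  exists (a :: w); split; last by rewrite reflprod_cons mulmxA.
  by move=> z; rewrite inE => /orP [/eqP ->|/wD].
exists [::]; split=> //; rewrite mulmx1; apply: dominant_simple => a /xD.
by rewrite -leNgt.
Qed.

Definition rho := \sum_(b <- posroots) b.

(* s_a fixes the sum N of the positive roots not collinear with a, so <N,a> = 0. *)
Lemma dotv_simple_rho_gt0 a : a \in D -> 0 < dotv a rho.
Proof.
move=> aD; have a0 := simple_neq0 aD.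
rewrite /rho -(perm_big _ (perm_posroots_col a)) big_cat /= dotvC dotvDl.
set N := \sum_(b <- posroots_ncol a) b.
have NsN : N *m refl a = N.
  by rewrite /N mulmx_suml -[RHS](perm_big _ (perm_refl_posroots_ncol aD)) big_map.
have -> : dotv N a = 0.
  apply/eqP; rewrite -eqNr -dotvNr -mulmx_refl_self // -trmx_refl -dotv_mulmx.
  by rewrite NsN.
rewrite addr0 dotv_suml (big_rem a (simple_posroots_col aD)) /=.
apply: lt_le_trans (dotv_gt0 a0) _; rewrite lerDl big_seq sumr_ge0 // => b /mem_rem.
by move=> /(posroots_colP aD) [c c0 ->]; rewrite dotvZl mulr_ge0 ?dotv_ge0 // ltW.
Qed.

(* Induction on the height <c,q>: reflecting in a simple g with <c,g> > 0 lowers it. *)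
Lemma refl_posroot_simple c :
  c \in posroots -> exists w, {subset w <= D} /\ refl c = reflprod w.
Proof.
have [m] := ubnP (count (fun y => (dotv y q < dotv c q)%R) posroots).
elim: m c => // m IH c szc cP; have c0 := posroot_neq0 cP.
have [g gD cg] : exists2 g, g \in D & 0 < dotv c g.
  apply/hasP; apply: contraT => /hasPn cD.
  have /(_ c cP) : dominant (- c).
    by apply: dominant_simple => a /cD; rewrite dotvNl oppr_ge0 leNgt.
  by rewrite dotvNl oppr_ge0 leNgt dotv_gt0.
have g0 := simple_neq0 gD.
have [colcg|ncolcg] := boolP (collinear c g).
  exists [:: g]; split=> [z|]; first by rewrite inE => /eqP ->.
  by rewrite (refl_collinear g0 c0 colcg) reflprod_cons mulmx1.
set c' := c *m refl g.
have c'P : c' \in posroots by apply: refl_simple_posroot.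
have c'c : dotv c' q < dotv c q.
  rewrite /c' mulmx_refl dotvBl dotvZl gtrDl oppr_lt0 mulr_gt0 ?simple_gt0 //.
  by rewrite divr_gt0 ?mulr_gt0 ?dotv_gt0.
have [w [wD ew]] : exists w, {subset w <= D} /\ refl c' = reflprod w.
  apply: (IH c' _ c'P); rewrite -ltnS (leq_trans _ szc) // ltnS.
  apply: (count_lt_subpred _ c'P) => [y /= yc'||]; last by rewrite /= ltxx.
    exact: lt_trans yc' c'c.
  exact: c'c.
exists (g :: w ++ [:: g]); split.
  by move=> z; rewrite inE mem_cat inE => /orP [/eqP ->|/orP [/wD|/eqP ->]].
have -> : c = c' *m refl g by rewrite mulmx_reflK.
rewrite refl_mulmx ?trmx_refl ?refl_invol // ew.
by rewrite reflprod_cons reflprod_cat reflprod_cons reflprod_nil mulmx1 mulmxA.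
Qed.

Lemma refl_root_simple b : b \in L -> exists w, {subset w <= D} /\ refl b = reflprod w.
Proof.
move=> bL; have /orP [bP|NbP] := root_posrootsVN bL; first exact: refl_posroot_simple.
by rewrite -reflN; apply: refl_posroot_simple.
Qed.

Lemma reflprod_simple w :
  {subset w <= L} -> exists w', {subset w' <= D} /\ reflprod w = reflprod w'.
Proof.
elim: w => [|a w IH] wL; first by exists [::].
have [wa [waD ea]] := refl_root_simple (wL a (mem_head _ _)).
have [w' [w'D ew]] : exists w', {subset w' <= D} /\ reflprod w = reflprod w'.
  by apply: IH => z zw; apply: wL; rewrite inE zw orbT.
exists (wa ++ w'); split; last by rewrite reflprod_cons reflprod_cat ea ew.
by move=> z; rewrite mem_cat => /orP [/waD|/w'D].
Qed.

Lemma reflprod_crossing w v : v \notin posroots -> v *m reflprod w \in posroots ->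
  exists w1 a w2, [/\ w = w1 ++ a :: w2, v *m reflprod w1 \notin posroots &
                      v *m reflprod w1 *m refl a \in posroots].
Proof.
elim: w v => [|a w IH] v vN; first by rewrite mulmx1 (negbTE vN).
have [vaP _|vaN] := boolP (v *m refl a \in posroots).
  by exists [::], a, w; rewrite mulmx1.
rewrite reflprod_cons mulmxA => /(IH _ vaN) [w1 [b [w2 [-> w1N w1bP]]]].
by exists (a :: w1), b, w2; rewrite reflprod_cons !mulmxA.
Qed.

(* Deletion: if b is the letter at which the image of -a becomes positive, then that
   image is collinear with b, so s_b = u^-1 s_a u and the letters a and b cancel. *)
Lemma simple_word_shorten a t : {subset a :: t <= D} -> a *m reflprod (a :: t) \in posroots ->
  exists w', [/\ {subset w' <= D}, (size w' < size (a :: t))%N &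
                 reflprod w' = reflprod (a :: t)].
Proof.
move=> atD; have aD := atD a (mem_head _ _); have a0 := simple_neq0 aD.
rewrite reflprod_cons mulmxA mulmx_refl_self //.
have NaN : - a \notin posroots by rewrite posrootN // simple_posroot.
move=> /(reflprod_crossing NaN) [w1 [b [w2 [et w1N w1bP]]]].
have {atD}[w1D bD w2D] : [/\ {subset w1 <= D}, b \in D & {subset w2 <= D}].
  by split=> [z zw|| z zw]; apply: atD; rewrite et inE mem_cat ?inE ?zw ?eqxx ?orbT.
set u := reflprod w1 in w1N w1bP *.
have uuT : u *m u^T = 1%:M by apply: reflprod_roots_orth => z /w1D /simple_root.
have uL : - a *m u \in L.
  by apply: root_mulmx_reflprod => [z /w1D /simple_root //|]; rewrite rootN ?simple_root.
have uNP : - (- a *m u) \in posroots by move: (root_posrootsVN uL); rewrite (negbTE w1N).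
have col : collinear (- (- a *m u)) b.
  apply: contraT => /(refl_simple_posroot bD uNP).
  by rewrite mulNmx posrootN.
have eb : refl b = u^T *m refl a *m u.
  rewrite -(refl_collinear (simple_neq0 bD) (posroot_neq0 uNP) col).
  by rewrite reflN mulNmx reflN refl_mulmx.
exists (w1 ++ w2); split.
- by move=> z; rewrite mem_cat => /orP [/w1D|/w2D].
- by rewrite et /= !size_cat /= addnS.
rewrite et !reflprod_cat reflprod_cons -/u eb !mulmxA -(mulmxA (refl a)) uuT mulmx1.
by rewrite refl_invol // mul1mx.
Qed.

Lemma simple_word_stable_id w : {subset w <= D} ->
  {in posroots, forall b, b *m reflprod w \in posroots} -> reflprod w = 1%:M.
Proof.
have [m] := ubnP (size w); elim: m w => // m IH [//|a t] szw wD wP.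
have aP := simple_posroot (wD a (mem_head _ _)).
have [w' [w'D szw' ew']] := simple_word_shorten wD (wP a aP).
rewrite -ew'; apply: IH w'D _; first exact: leq_trans szw' szw.
by move=> b bP; rewrite ew' wP.
Qed.

End SimpleSystem.

Lemma dominant_reflprod x : exists w, {subset w <= L} /\ dominant (x *m reflprod w).
Proof.
have [D simpleD] := exists_simple_system.
have [w [wD domw]] := dominant_reflprod_simple simpleD x.
by exists w; split=> // z /wD /(simple_root simpleD).
Qed.

Lemma dotv_posroot_rho_gt0 b : b \in posroots -> 0 < dotv b rho.
Proof.
move=> bP; have [D simpleD] := exists_simple_system.
apply: cone_dotv_gt0 (posroot_cone simpleD bP) (posroot_neq0 bP) _.
exact: dotv_simple_rho_gt0.
Qed.

Lemma reflprod_stable_id w : {subset w <= L} ->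
  {in posroots, forall b, b *m reflprod w \in posroots} -> reflprod w = 1%:M.
Proof.
move=> wL wP; have [D simpleD] := exists_simple_system.
have [w' [w'D ew']] := reflprod_simple simpleD wL.
by rewrite ew' (simple_word_stable_id simpleD w'D) // -ew'.
Qed.

Lemma rho_regular : {in L, forall c, dotv c rho != 0}.
Proof.
move=> c cL; have /orP [cP|NcP] := root_posrootsVN cL.
  by rewrite gt_eqF ?dotv_posroot_rho_gt0.
by rewrite -oppr_eq0 -dotvNl gt_eqF ?dotv_posroot_rho_gt0.
Qed.

Lemma posroots_mulmx M : {in L, forall b, b *m M \in L} -> dominant (q *m M^T) ->
  {in posroots, forall b, b *m M \in posroots}.
Proof.
move=> LM domM b bP; have bML := LM b (posroot_root bP).
rewrite mem_posroots bML lt_def regq //= dotv_mulmx dotvC.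
exact: domM.
Qed.

Lemma rho_mulmx M : M *m M^T = 1%:M -> {in posroots, forall b, b *m M \in posroots} ->
  rho *m M = rho.
Proof.
move=> MMT PM; have injM : injective (fun v : 'rV[R]_n => v *m M).
  by move=> x y /= exy; rewrite -(mulmx1 x) -MMT mulmxA exy -mulmxA MMT mulmx1.
have uMP : uniq [seq b *m M | b <- posroots] by rewrite map_inj_uniq ?uniq_posroots.
have MP_P : {subset [seq b *m M | b <- posroots] <= posroots}.
  by move=> x /mapP [b bP ->]; apply: PM.
have [_ eqMP] := uniq_min_size uMP MP_P (eq_leq (esym (size_map _ _))).
by rewrite /rho mulmx_suml -[RHS](perm_big _ (uniq_perm uMP uniq_posroots eqMP)) big_map.
Qed.

Lemma reflprod_fix_regular w : {subset w <= L} -> q *m reflprod w = q -> reflprod w = 1%:M.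
Proof.
move=> wL qw; apply: (reflprod_stable_id wL).
apply: posroots_mulmx => [b|b bP]; first exact: root_mulmx_reflprod wL.
rewrite -{1}qw -mulmxA reflprod_roots_orth // mulmx1 dotvC ltW //.
exact: posroot_gt0.
Qed.

End RootSystem.

Section Regular.
Variables (R : realFieldType) (n : nat).
Implicit Types (L : seq 'rV[R]_n) (x y : 'rV[R]_n).

Lemma exists_avoid_zeros (s : seq (R * R)) : {in s, forall p, p.1 != 0 \/ p.2 != 0} ->
  exists t, {in s, forall p, p.1 + t * p.2 != 0}.
Proof.
move=> s_neq0; exists (1 + \sum_(p <- s) `|p.1 / p.2|) => p ps.
set t := 1 + _; have t_gt0 : 0 < t by rewrite ltr_wpDr // sumr_ge0.
have [p2_0|p2_neq0] := eqVneq p.2 0.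
  by rewrite p2_0 mulr0 addr0; case: (s_neq0 p ps) => //; rewrite p2_0 eqxx.
apply/negP => /eqP ep.
have et : t = - (p.1 / p.2).
  by apply/(mulIf p2_neq0)/eqP; rewrite mulNr divfK // -addr_eq0 addrC ep.
have : `|p.1 / p.2| <= \sum_(p <- s) `|p.1 / p.2| by rewrite (big_rem _ ps) /= lerDl sumr_ge0.
by rewrite -normrN -et gtr0_norm // /t; lra.
Qed.

Lemma exists_regular_comb L x y : {in L, forall a, dotv a x != 0 \/ dotv a y != 0} ->
  exists t, {in L, forall a, dotv a (x + t *: y) != 0}.
Proof.
move=> Lxy.
have /exists_avoid_zeros [t tP] :
    {in [seq (dotv a x, dotv a y) | a <- L], forall p, p.1 != 0 \/ p.2 != 0}.
  by move=> p /mapP [a aL ->]; apply: Lxy.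
by exists t => a aL; rewrite dotvDr dotvZr (tP (dotv a x, dotv a y)) // map_f.
Qed.

Lemma exists_regular_subspace L (P : 'rV[R]_n -> Prop) :
  (forall u v, P u -> P v -> P (u + v)) -> (forall c u, P u -> P (c *: u)) -> P 0 ->
  {in L, forall a, P a /\ a != 0} -> exists v, P v /\ {in L, forall a, dotv a v != 0}.
Proof.
move=> PD PZ P0; elim: L => [|a L IH] LP; first by exists 0.
have [v [Pv vreg]] : exists v, P v /\ {in L, forall b, dotv b v != 0}.
  by apply: IH => b bL; apply: LP; rewrite inE bL orbT.
have [Pa a0] := LP a (mem_head _ _).
have [t treg] : exists t, {in a :: L, forall b, dotv b (v + t *: a) != 0}.
  apply: exists_regular_comb => b; rewrite inE => /orP [/eqP ->|/vreg]; last by left.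
  by right; rewrite dotv_eq0.
by exists (v + t *: a); split; [apply: PD => //; apply: PZ|].
Qed.

End Regular.

Lemma orth_proj_eq0 (R : realFieldType) (n : nat) (P : 'rV[R]_n -> Prop) a w x b c :
  is_orth_proj P a w -> P x -> dotv a x = 0 -> w = c *: b -> dotv b x != 0 -> w = 0.
Proof.
move=> [_ wproj] Px ax ew bx; have := wproj x Px; rewrite dotvBl ax sub0r ew dotvZl.
by move/eqP; rewrite oppr_eq0 mulf_eq0 (negbTE bx) orbF => /eqP ->; rewrite scale0r.
Qed.

Section Involution.
Variables (R : realFieldType) (n : nat) (rs : seq 'rV[R]_n) (sg : 'M[R]_n).
Hypothesis rootR : root_system rs.
Hypothesis sg_orth : sg *m sg^T = 1%:M.
Hypothesis sg_invol : sg *m sg = 1%:M.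
Implicit Types (u v a b : 'rV[R]_n) (e : R) (M : 'M[R]_n).

Lemma trmx_sg : sg^T = sg.
Proof. by rewrite -[sg^T]mul1mx -sg_invol -mulmxA sg_orth mulmx1. Qed.

Lemma dotv_mulmx_sg u v : dotv (u *m sg) v = dotv u (v *m sg).
Proof. by rewrite dotv_mulmx trmx_sg. Qed.

Lemma dotv_eigvec u v e f : u *m sg = e *: u -> v *m sg = f *: v -> e != f -> dotv u v = 0.
Proof.
move=> usg vsg ef; have := dotv_mulmx_sg u v; rewrite usg vsg dotvZl dotvZr.
by move/eqP; rewrite -subr_eq0 -mulrBl mulf_eq0 subr_eq0 (negbTE ef) => /eqP.
Qed.

Lemma eigvec_of_orth e a : e * e = 1 ->
  (forall u, u *m sg = e *: u -> dotv a u = 0) -> a *m sg = - e *: a.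
Proof.
move=> ee aorth; set u := a + e *: (a *m sg).
have usg : u *m sg = e *: u.
  by rewrite mulmxDl -scalemxAl -mulmxA sg_invol mulmx1 scalerDr scalerA ee scale1r addrC.
have au := aorth u usg.
have : dotv u u = 0 by rewrite {1}/u dotvDl dotvZl dotv_mulmx_sg usg dotvZr au !mulr0 addr0.
move/eqP; rewrite dotv_eq0 addr_eq0 => /eqP /(congr1 (fun v => e *: v)).
by rewrite scalerN scalerA ee scale1r scaleNr => ->; rewrite opprK.
Qed.

Definition eigroots e := [seq a <- rs | a *m sg == e *: a].

Lemma mem_eigroots e b : (b \in eigroots e) = (b \in rs) && (b *m sg == e *: b).
Proof. by rewrite mem_filter andbC. Qed.

Lemma roots1E : roots1 rs sg = eigroots (-1).
Proof. by apply: eq_filter => a; rewrite scaleN1r. Qed.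

Lemma roots2E : roots2 rs sg = eigroots 1.
Proof. by apply: eq_filter => a; rewrite scale1r. Qed.

Lemma refl_sg_comm e a : a *m sg = e *: a -> refl a *m sg = sg *m refl a.
Proof.
move=> asg; apply: mx_ext => v; rewrite !mulmxA !mulmx_refl mulmxBl -scalemxAl.
by rewrite dotv_mulmx_sg asg dotvZr scalerA; congr (_ - _ *: _); ring.
Qed.

Lemma reflprod_eigroots_comm e (w : seq 'rV[R]_n) : {subset w <= eigroots e} ->
  reflprod w *m sg = sg *m reflprod w.
Proof.
elim: w => [|a w IH] wR; first by rewrite mul1mx mulmx1.
have /andP [_ /eqP asg] : (a \in rs) && (a *m sg == e *: a).
  by rewrite -mem_eigroots wR ?mem_head.
rewrite reflprod_cons -mulmxA IH => [|b bw]; last by rewrite wR // inE bw orbT.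
by rewrite !mulmxA (refl_sg_comm asg).
Qed.

Lemma eigroots_mulmx e M b : {in rs, forall a, a *m M \in rs} -> M *m sg = sg *m M ->
  b \in eigroots e -> b *m M \in eigroots e.
Proof.
move=> rsM Msg; rewrite !mem_eigroots => /andP [bR /eqP bsg].
by rewrite rsM //= -mulmxA Msg mulmxA bsg scalemxAl.
Qed.

Lemma eigroots_root_system e : root_system (eigroots e).
Proof.
case: rootR => rs0 rsr; split=> [a|a b aR bR].
  by rewrite mem_eigroots => /andP [/rs0].
move: (aR); rewrite mem_eigroots => /andP [aR' /eqP asg].
apply: eigroots_mulmx bR => [c cR|]; first exact: rsr.
exact: refl_sg_comm asg.
Qed.

Lemma eigroots_sub e : {subset eigroots e <= rs}.
Proof. by move=> b; rewrite mem_eigroots => /andP []. Qed.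

Lemma orth_proj_V1_eq0 a w x : is_orth_proj (V1 sg) a w ->
  prop_to_root (roots1 rs sg) w \/ prop_to_root (roots2 rs sg) w ->
  x *m sg = - x -> {in roots1 rs sg, forall b, dotv b x != 0} -> dotv a x = 0 -> w = 0.
Proof.
move=> wproj [[b [c [bR ew]]]|[b [c [bR ew]]]] xV xreg ax.
  exact: orth_proj_eq0 wproj xV ax ew (xreg b bR).
move: bR; rewrite mem_filter => /andP [/eqP bsg _].
by case: wproj => wV _; apply: rV_oppr_eq; rewrite -wV ew -scalemxAl bsg.
Qed.

Lemma orth_proj_V2_eq0 a w x : is_orth_proj (V2 sg) a w ->
  prop_to_root (roots1 rs sg) w \/ prop_to_root (roots2 rs sg) w ->
  x *m sg = x -> {in roots2 rs sg, forall b, dotv b x != 0} -> dotv a x = 0 -> w = 0.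
Proof.
move=> wproj [[b [c [bR ew]]]|[b [c [bR ew]]]] xV xreg ax; last first.
  exact: orth_proj_eq0 wproj xV ax ew (xreg b bR).
move: bR; rewrite mem_filter => /andP [/eqP bsg _].
case: wproj => wV _; apply: rV_oppr_eq.
by rewrite -[RHS]wV ew -scalemxAl bsg scalerN.
Qed.

Lemma special_regular x1 x2 : special rs sg ->
  x1 *m sg = - x1 -> {in roots1 rs sg, forall b, dotv b x1 != 0} ->
  x2 *m sg = x2 -> {in roots2 rs sg, forall b, dotv b x2 != 0} ->
  {in rs, forall a, dotv a x1 != 0 \/ dotv a x2 != 0}.
Proof.
move=> spec x1V x1reg x2V x2reg a aR.
have [a1|] := eqVneq (dotv a x1) 0; last by left.
have [a2|] := eqVneq (dotv a x2) 0; last by right.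
exfalso; case: (spec a aR) => -[w [wproj wroot]].
  have w0 := orth_proj_V1_eq0 wproj wroot x1V x1reg a1.
  have asg : a *m sg = a.
    rewrite -[RHS]scale1r -[1]opprK; apply: eigvec_of_orth; first by rewrite mulN1r opprK.
    by move=> u; rewrite scaleN1r; case: wproj => _ /(_ u); rewrite w0 subr0.
  by move: (x2reg a); rewrite mem_filter asg eqxx aR a2 eqxx => /(_ isT).
have w0 := orth_proj_V2_eq0 wproj wroot x2V x2reg a2.
have asg : a *m sg = - a.
  rewrite -[in RHS](scale1r a) -scaleNr; apply: eigvec_of_orth; first by rewrite mulr1.
  by move=> u; rewrite scale1r; case: wproj => _ /(_ u); rewrite w0 subr0.
by move: (x1reg a); rewrite mem_filter asg eqxx aR a1 eqxx => /(_ isT).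
Qed.

Lemma rho_eigroots e q : rho (eigroots e) q *m sg = e *: rho (eigroots e) q.
Proof.
rewrite mulmx_suml scaler_sumr big_seq [RHS]big_seq; apply: eq_bigr => b.
by rewrite mem_filter mem_undup mem_eigroots => /and3P [_ _ /eqP].
Qed.

Lemma exists_eigvec_regular e :
  exists q, q *m sg = e *: q /\ {in eigroots e, forall a, dotv a q != 0}.
Proof.
apply: exists_regular_subspace => [u v usg vsg|c u usg||a].
- by rewrite mulmxDl usg vsg scalerDr.
- by rewrite -scalemxAl usg !scalerA mulrC.
- by rewrite mul0mx scaler0.
rewrite mem_eigroots => /andP [aR /eqP asg]; split=> //.
by case: rootR => rs0 _; apply: rs0.
Qed.

Lemma rho_eigroots_fixed e q (w : seq 'rV[R]_n) :
  {subset w <= rs} -> reflprod w *m sg = sg *m reflprod w ->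
  {in eigroots e, forall a, dotv a q != 0} -> dominant (eigroots e) q (q *m reflprod w) ->
  rho (eigroots e) q *m reflprod w = rho (eigroots e) q.
Proof.
move=> wR hsg qreg domq; set h := reflprod w.
have hTh : h^T *m h = 1%:M by apply/mulmx1C; rewrite /h (reflprod_roots_orth rootR).
have hTrs : {in rs, forall a, a *m h^T \in rs}.
  by move=> a aR; rewrite trmx_reflprod root_mulmx_reflprod // => b; rewrite mem_rev => /wR.
have hTsg : h^T *m sg = sg *m h^T by rewrite -{1}trmx_sg -trmx_mul -hsg trmx_mul trmx_sg.
have rhoT : rho (eigroots e) q *m h^T = rho (eigroots e) q.
  apply: rho_mulmx; rewrite ?trmxK //.
  by apply: posroots_mulmx; rewrite ?trmxK // => b; apply: eigroots_mulmx.
by rewrite -{1}rhoT -mulmxA hTh mulmx1.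
Qed.

Lemma eigvec_mulmx e v M : M *m sg = sg *m M -> v *m sg = e *: v ->
  v *m M *m sg = e *: (v *m M).
Proof. by move=> Msg vsg; rewrite -mulmxA Msg mulmxA vsg scalemxAl. Qed.

Lemma eigvec_reflprod_fix e f v (w : seq 'rV[R]_n) :
  v *m sg = e *: v -> {subset w <= eigroots f} -> e != f -> v *m reflprod w = v.
Proof.
move=> vsg wR ef; apply: mulmx_reflprod_orth => c /wR.
by rewrite mem_eigroots => /andP [_ /eqP csg]; apply: dotv_eigvec vsg csg ef.
Qed.

Lemma centraliser_sub g : special rs sg -> reflgroup rs g -> g *m sg = sg *m g ->
  exists w1 w2, [/\ {subset w1 <= eigroots (-1)}, {subset w2 <= eigroots 1} &
                    g = reflprod w1 *m reflprod w2].
Proof.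
move=> spec /reflgroupP [wg [wgR eg]] gsg.
have N11 : (-1 : R) != 1 by rewrite eqNr oner_eq0.
have [q1 [q1sg q1reg]] := exists_eigvec_regular (-1).
have [q2 [q2sg q2reg]] := exists_eigvec_regular 1.
have [w1 [w1R dom1]] := dominant_reflprod (eigroots_root_system (-1)) q1reg (q1 *m g).
have [w2 [w2R dom2]] := dominant_reflprod (eigroots_root_system 1) q2reg (q2 *m g).
set w := wg ++ w2 ++ w1.
have eh : g *m reflprod w2 *m reflprod w1 = reflprod w by rewrite eg !reflprod_cat mulmxA.
have wR : {subset w <= rs}.
  by move=> z; rewrite !mem_cat => /or3P [/wgR|/w2R/eigroots_sub|/w1R/eigroots_sub].
have hsg : reflprod w *m sg = sg *m reflprod w.
  rewrite -eh -!mulmxA (reflprod_eigroots_comm w1R) !mulmxA -(mulmxA _ (reflprod w2)).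
  by rewrite (reflprod_eigroots_comm w2R) !mulmxA gsg.
have /(rho_eigroots_fixed wR hsg q1reg) rho1 : dominant (eigroots (-1)) q1 (q1 *m reflprod w).
  by rewrite -eh !mulmxA (eigvec_reflprod_fix (eigvec_mulmx gsg q1sg) w2R).
have /(rho_eigroots_fixed wR hsg q2reg) rho2 : dominant (eigroots 1) q2 (q2 *m reflprod w).
  rewrite -eh !mulmxA (eigvec_reflprod_fix (e := 1) _ w1R) 1?eq_sym //.
  by apply: eigvec_mulmx (reflprod_eigroots_comm w2R) (eigvec_mulmx gsg q2sg).
set r1 := rho (eigroots (-1)) q1 in rho1; set r2 := rho (eigroots 1) q2 in rho2.
have /exists_regular_comb [t treg] : {in rs, forall a, dotv a r1 != 0 \/ dotv a r2 != 0}.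
  apply: special_regular; rewrite ?roots1E ?roots2E //.
  - by rewrite rho_eigroots scaleN1r.
  - exact: (rho_regular (eigroots_root_system (-1)) q1reg).
  - by rewrite rho_eigroots scale1r.
  - exact: (rho_regular (eigroots_root_system 1) q2reg).
have /(reflprod_fix_regular rootR treg wR) h1 : (r1 + t *: r2) *m reflprod w = r1 + t *: r2.
  by rewrite mulmxDl -scalemxAl rho1 rho2.
exists (rev w1), (rev w2); split=> [z|z|]; rewrite ?mem_rev; [exact: w1R | exact: w2R |].
rewrite -!trmx_reflprod -trmx_mul -[g]mulmx1 -(reflprod_roots_orth rootR (w := w2 ++ w1)).
  by rewrite reflprod_cat !mulmxA eh h1 mul1mx.
by move=> z; rewrite mem_cat => /orP [/w2R|/w1R]; apply: eigroots_sub.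
Qed.

Lemma reflgroup_eigroots_comm (w1 w2 : seq 'rV[R]_n) :
  {subset w1 <= eigroots (-1)} -> {subset w2 <= eigroots 1} ->
  reflgroup rs (reflprod w1 *m reflprod w2) /\
  reflprod w1 *m reflprod w2 *m sg = sg *m (reflprod w1 *m reflprod w2).
Proof.
move=> w1R w2R; split.
  apply/reflgroupP; exists (w1 ++ w2); rewrite reflprod_cat; split=> // z.
  by rewrite mem_cat => /orP [/w1R|/w2R]; apply: eigroots_sub.
by rewrite -mulmxA (reflprod_eigroots_comm w2R) !mulmxA (reflprod_eigroots_comm w1R).
Qed.

End Involution.

Unset Implicit Arguments.

Theorem proposition10 (R : realType) (n : nat) (rs : seq 'rV[R]_n) (sigma : 'M[R]_n) :
  root_system rs ->
  reflgroup rs sigma ->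
  sigma *m sigma = 1%:M ->
  special rs sigma ->
  forall g : 'M[R]_n,
    (reflgroup rs g /\ g *m sigma = sigma *m g) <->
    (exists g1 g2, G1 rs sigma g1 /\ G2 rs sigma g2 /\ g = g1 *m g2).
Proof.
move=> rootR /reflgroupP [ws [wsR esg]] sg_invol spec g.
have sg_orth : sigma *m sigma^T = 1%:M by rewrite esg (reflprod_roots_orth rootR).
rewrite /G1 /G2 roots1E roots2E; split=> [[gG gsg]|[g1 [g2 [g1G [g2G ->]]]]].
  have [w1 [w2 [w1R w2R ->]]] := centraliser_sub rootR sg_orth sg_invol spec gG gsg.
  exists (reflprod w1), (reflprod w2); split; first by apply/reflgroupP; exists w1.
  by split=> //; apply/reflgroupP; exists w2.
move: g1G g2G => /reflgroupP [w1 [w1R ->]] /reflgroupP [w2 [w2R ->]].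
exact: reflgroup_eigroots_comm.
Qed.
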